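(* The function $k_p$ is a closure operator on $\mathcal{L}$, i.e. for all $\ell, \jmath \in \mathcal{L}$: (1) $\ell \sqsubseteq k_p(\ell)$; (2) $\ell \sqsubseteq \jmath \implies k_p(\ell) \sqsubseteq k_p(\jmath)$; (3) $k_p(\ell) = k_p(k_p(\ell))$.
   Context: $\mathcal{L}$ is a security lattice (ordered by $\sqsubseteq$) that also has greatest lower bounds (meets) of arbitrary subsets. Programs $p$ are partial functions from $\mathcal{P}(I \times \mathcal{L})$ to $\mathcal{P}(O \times \mathcal{L})$ (sets of labeled inputs to sets of labeled outputs), and for a labeled set $x$, $\mathcal{L}(x) = \{\ell \mid a^\ell \in x\}$ is the set of labels occurring in $x$. For such a program $p$ define $k_p(\ell)$ to be the greatest lower bound (meet) in $\mathcal{L}$ of the set $\{\jmath \mid \exists x.\ \jmath \in \mathcal{L}(p(x)) \wedge \ell \sqsubseteq \jmath\}$, i.e. of all output labels of $p$ that lie above $\ell$ (the meet of the empty set being the top element). *)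

From mathcomp Require Import all_boot all_order.
Set Implicit Arguments. Unset Strict Implicit. Unset Printing Implicit Defensive.
Import Order.TTheory.
Local Open Scope order_scope.

Definition is_glb_op (d : Order.disp_t) (L : porderType d) (inf : (L -> Prop) -> L) : Prop :=
  forall S : L -> Prop,
    (forall x, S x -> inf S <= x) /\
    (forall y, (forall x, S x -> y <= x) -> y <= inf S).

(* A program: partial function from sets of labeled inputs to sets of
   labeled outputs; partiality is modelled with [option]. *)
Definition program (I O : Type) (L : Type) :=
  (I * L -> Prop) -> option (O * L -> Prop).

Definition labels (A L : Type) (x : A * L -> Prop) : L -> Prop :=
  fun l => exists a, x (a, l).

Definition out_labels (I O L : Type) (p : program I O L) : L -> Prop :=
  fun j => exists x y, p x = Some y /\ labels y j.

Definition kp (d : Order.disp_t) (L : porderType d) (inf : (L -> Prop) -> L)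
  (I O : Type) (p : program I O L) (l : L) : L :=
  inf (fun j => out_labels p j /\ l <= j).

From mathcomp Require Import all_boot all_order.
Import Order.TTheory.
Local Open Scope order_scope.

(* k_p(l) is the meet of the up-set of l inside the output labels. Enlarging
   that set can only lower its meet, and for idempotence every output label
   above l already lies above k_p(l), so both sets have the same meet. *)

Section GlbOperator.

Variables (d : Order.disp_t) (L : porderType d) (inf : (L -> Prop) -> L).
Hypothesis inf_glb : is_glb_op inf.

Lemma inf_lb (S : L -> Prop) (x : L) : S x -> inf S <= x.
Proof. exact: (proj1 (inf_glb S)). Qed.

Lemma le_inf (S : L -> Prop) (y : L) : (forall x, S x -> y <= x) -> y <= inf S.
Proof. exact: (proj2 (inf_glb S)). Qed.

Lemma le_inf_sub (S T : L -> Prop) : (forall x, S x -> T x) -> inf T <= inf S.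
Proof. by move=> ST; apply: le_inf => x /ST; apply: inf_lb. Qed.

Variables (I O : Type) (p : program I O L).

Lemma kp_ext (l : L) : l <= kp inf p l.
Proof. by apply: le_inf => x []. Qed.

Lemma kp_mono (l j : L) : l <= j -> kp inf p l <= kp inf p j.
Proof.
by move=> le_lj; apply: le_inf_sub => x [px le_jx]; split=> //; apply: le_trans le_jx.
Qed.

Lemma kp_idem (l : L) : kp inf p (kp inf p l) = kp inf p l.
Proof.
apply/le_anti/andP; split; last exact/kp_mono/kp_ext.
by apply: le_inf_sub => x [px le_lx]; split=> //; apply: inf_lb.
Qed.

End GlbOperator.

Theorem mainTheorem11 (d : Order.disp_t) (L : latticeType d)
  (inf : (L -> Prop) -> L) (Hinf : is_glb_op inf)
  (I O : Type) (p : program I O L) :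
  (forall l : L, l <= kp inf p l) /\
  (forall l j : L, l <= j -> kp inf p l <= kp inf p j) /\
  (forall l : L, kp inf p l = kp inf p (kp inf p l)).
Proof.
split; first exact: kp_ext.
split; first exact: kp_mono.
by move=> l; rewrite kp_idem.
Qed.
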